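(* Let $\boldsymbol{W}$ have unit-norm rows, $|b_j|\le r_b$, $S\subseteq[N]$, and $\boldsymbol{a}^*$ with $a^*_j=0$ for $j\notin S$ and $\|\boldsymbol{a}^*\|\le\tilde r_a/\sqrt{|S|}$. Let $r_z\ge1\vee2\varepsilon$ and $$\epsilon_{\mathrm{approx}}=\sup_{\|\boldsymbol{U}\boldsymbol{x}\|\le r_z}|f(\boldsymbol{x};\boldsymbol{a}^*,\Pi_{\boldsymbol{U}}\boldsymbol{W},\boldsymbol{b})-h(\boldsymbol{U}\boldsymbol{x})|,$$ where $h:\mathbb{R}^k\to\mathbb{R}$ satisfies $|h(\boldsymbol{z})|\le L_h(1+\|\boldsymbol{z}\|^p)$ for all $\boldsymbol{z}$ and some constant $p\ge0$. Assume $\boldsymbol{x}$ is zero-mean with subGaussian norm bounded by an absolute constant, $k$ is a constant, and $\sigma$ satisfies condition (PL). Then $$\mathbb{E}\Big[\max_{\|\boldsymbol{\delta}\|\le\varepsilon}\big(f(\boldsymbol{x}+\boldsymbol{\delta};\boldsymbol{a}^*,\Pi_{\boldsymbol{U}}\boldsymbol{W},\boldsymbol{b})-h(\boldsymbol{U}(\boldsymbol{x}+\boldsymbol{\delta}))\big)^2\Big]\le\epsilon_{\mathrm{approx}}^2+\Big(C_{\bar q}L_\sigma^2\tilde r_a^2(1+\varepsilon^{2\bar q}+r_b^{2\bar q})+C_{p,k}L_h^2(1+\varepsilon^{2p})\Big)e^{-cr_z^2},$$ where $C_{\bar q}$ depends only on $\bar q$, $C_{p,k}$ only on $p,k$, and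 $c>0$ is an absolute constant.
   Context: $\boldsymbol{U}\in\mathbb{R}^{k\times d}$ has orthonormal rows $\boldsymbol{u}_1,\dots,\boldsymbol{u}_k$. For unit $\boldsymbol{w}$, $\Pi_{\boldsymbol{U}}\boldsymbol{w}=\boldsymbol{U}^\top\boldsymbol{U}\boldsymbol{w}/\|\boldsymbol{U}\boldsymbol{w}\|$ (and $=\boldsymbol{u}_1$ if $\boldsymbol{U}\boldsymbol{w}=0$); $\Pi_{\boldsymbol{U}}\boldsymbol{W}$ has rows $\Pi_{\boldsymbol{U}}\boldsymbol{w}_j$. Network $f(\boldsymbol{x};\boldsymbol{a},\boldsymbol{W},\boldsymbol{b})=\sum_ja_j\sigma(\langle\boldsymbol{w}_j,\boldsymbol{x}\rangle+b_j)$. Condition (PL): $\sigma(0)=0$ and $|\sigma(z_1)-\sigma(z_2)|\le L_\sigma(|z_1|^{\bar q-1}+|z_2|^{\bar q-1}+1)|z_1-z_2|$, $\bar q\ge1$. $\varepsilon\ge0$ is the adversary budget. *)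

From HB Require Import structures.
From mathcomp Require Import all_boot all_order all_algebra.
From mathcomp Require Import all_classical all_reals all_analysis.
From mathcomp Require Import measurable_realfun.
Set Implicit Arguments. Unset Strict Implicit. Unset Printing Implicit Defensive.
Import Order.TTheory GRing.Theory Num.Theory.
Import numFieldNormedType.Exports.
Local Open Scope classical_set_scope.
Local Open Scope ring_scope.

(* Vectors of R^n are row vectors 'rV[R]_n. *)
Definition dotv {R : ringType} {n : nat} (u v : 'rV[R]_n) : R :=
  \sum_(i < n) u ord0 i * v ord0 i.

Definition vnorm {R : realType} {n : nat} (v : 'rV[R]_n) : R :=
  Num.sqrt (dotv v v).

Definition first_row {R : ringType} {k d : nat} (U : 'M[R]_(k, d)) : 'rV[R]_d :=
  match [pick i : 'I_k | val i == 0%N] with Some i => row i U | None => 0 end.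

(* Pi_U w = U^T U w / ||U w||, and u_1 if U w = 0 (w as a row vector) *)
Definition PiU {R : realType} {k d : nat} (U : 'M[R]_(k, d)) (w : 'rV[R]_d)
  : 'rV[R]_d :=
  let Uw := w *m U^T in
  if Uw == 0 then first_row U else (vnorm Uw)^-1 *: (Uw *m U).

Definition PiUW {R : realType} {k d N : nat} (U : 'M[R]_(k, d)) (W : 'M[R]_(N, d))
  : 'M[R]_(N, d) :=
  \matrix_(j < N, l < d) (PiU U (row j W)) ord0 l.

Definition netf {R : realType} {d N : nat} (sigma : R -> R) (x : 'rV[R]_d)
  (a : 'I_N -> R) (W : 'M[R]_(N, d)) (b : 'I_N -> R) : R :=
  \sum_(j < N) a j * sigma (dotv (row j W) x + b j).

Definition PL_cond {R : realType} (sigma : R -> R) (Ls qbar : R) : Prop :=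
  sigma 0 = 0 /\ 1 <= qbar /\
  forall z1 z2 : R,
    `|sigma z1 - sigma z2| <=
      Ls * (`|z1| `^ (qbar - 1) + `|z2| `^ (qbar - 1) + 1) * `|z1 - z2|.

Definition psi2norm {dT} {T : measurableType dT} {R : realType}
  (P : probability T R) (Y : T -> R) : \bar R :=
  ereal_inf [set t%:E | t in [set t : R | 0 < t /\
     (\int[P]_w (expR (Y w ^+ 2 / t ^+ 2))%:E <= 2%:E)%E]].

Definition subg_norm_vec {dT} {T : measurableType dT} {R : realType} {n : nat}
  (P : probability T R) (X : T -> 'rV[R]_n) : \bar R :=
  ereal_sup [set psi2norm P (fun w => dotv v (X w)) | v in [set v | vnorm v = 1]].

Definition adv_loss {R : realType} {k d N : nat} (sigma : R -> R)
  (astar : 'I_N -> R) (U : 'M[R]_(k, d)) (W : 'M[R]_(N, d)) (b : 'I_N -> R)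
  (h : 'rV[R]_k -> R) (eps : R) (x : 'rV[R]_d) : \bar R :=
  ereal_sup [set ((netf sigma (x + delta) astar (PiUW U W) b
                   - h ((x + delta) *m U^T)) ^+ 2)%:E
             | delta in [set delta : 'rV[R]_d | vnorm delta <= eps]].

Definition eps_approx {R : realType} {k d N : nat} (sigma : R -> R)
  (astar : 'I_N -> R) (U : 'M[R]_(k, d)) (W : 'M[R]_(N, d)) (b : 'I_N -> R)
  (h : 'rV[R]_k -> R) (rz : R) : \bar R :=
  ereal_sup [set (`|netf sigma x astar (PiUW U W) b - h (x *m U^T)|)%:E
             | x in [set x : 'rV[R]_d | vnorm (x *m U^T) <= rz]].

(* Split every perturbed input [x + delta] according to whether [||U (x + delta)|| <= rz].
   Inside this ball the squared error is at most [eps_approx^2].  Outside it,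
   [||U x|| >= rz - eps >= rz / 2]; there the growth condition (PL) on [sigma], the
   sparsity of [a*] and the polynomial growth of [h] bound the squared error by a polynomial
   in [||U x||], [eps] and [rb], which is dominated by [exp (||U x||^2 / (2 alpha))] with
   [alpha = k (2K)^2].  As [||U x|| >= rz / 2], this is at most
   [exp (- rz^2 / (8 alpha)) exp (||U x||^2 / alpha)], and
   [exp (||U x||^2 / alpha) <= sum_i exp (<u_i, x>^2 / (2K)^2)] since a mean is below a max.
   Each of these [k] terms has expectation at most [2] by the definition of the
   subGaussian norm. *)

From HB Require Import structures.
From mathcomp Require Import all_boot all_order all_algebra.
From mathcomp Require Import all_classical all_reals all_analysis.
From mathcomp Require Import measurable_realfun.
From mathcomp Require Import ring lra.
Import Order.TTheory GRing.Theory Num.Theory.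
Import numFieldNormedType.Exports.
Local Open Scope classical_set_scope.
Local Open Scope ring_scope.
Set Implicit Arguments. Unset Strict Implicit. Unset Printing Implicit Defensive.

Section Euclidean.
Variable R : realType.
Implicit Types (n k d : nat).

Lemma dotvC n (u v : 'rV[R]_n) : dotv u v = dotv v u.
Proof. by apply: eq_bigr => i _; rewrite mulrC. Qed.

Lemma dotvDl n (u v w : 'rV[R]_n) : dotv (u + v) w = dotv u w + dotv v w.
Proof. by rewrite /dotv -big_split; apply: eq_bigr => i _; rewrite mxE mulrDl. Qed.

Lemma dotvZl n c (u w : 'rV[R]_n) : dotv (c *: u) w = c * dotv u w.
Proof. by rewrite /dotv mulr_sumr; apply: eq_bigr => i _; rewrite mxE mulrA. Qed.

Lemma dotvBl n (u v w : 'rV[R]_n) : dotv (u - v) w = dotv u w - dotv v w.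
Proof. by rewrite dotvDl -scaleN1r dotvZl mulN1r. Qed.

Lemma dotvvE n (u : 'rV[R]_n) : dotv u u = \sum_i u ord0 i ^+ 2.
Proof. by apply: eq_bigr => i _; rewrite expr2. Qed.

Lemma dotvv_ge0 n (u : 'rV[R]_n) : 0 <= dotv u u.
Proof. by rewrite dotvvE sumr_ge0 // => i _; rewrite sqr_ge0. Qed.

Lemma vnorm_ge0 n (u : 'rV[R]_n) : 0 <= vnorm u.
Proof. exact: sqrtr_ge0. Qed.

Lemma vnorm0 n : vnorm (0 : 'rV[R]_n) = 0.
Proof. by rewrite /vnorm /dotv big1 ?sqrtr0 // => i _; rewrite mxE mul0r. Qed.

Lemma vnorm_sqr n (u : 'rV[R]_n) : vnorm u ^+ 2 = dotv u u.
Proof. by rewrite sqr_sqrtr // dotvv_ge0. Qed.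

Lemma dotv_sqr_le n (u v : 'rV[R]_n) : dotv u v ^+ 2 <= dotv u u * dotv v v.
Proof.
have quad t : 0 <= t ^+ 2 * dotv u u - 2 * t * dotv u v + dotv v v.
  suff -> : t ^+ 2 * dotv u u - 2 * t * dotv u v + dotv v v
            = dotv (t *: u - v) (t *: u - v) by exact: dotvv_ge0.
  rewrite dotvBl ![dotv _ (_ - _)]dotvC !dotvBl !dotvZl ![dotv _ (t *: u)]dotvC.
  by rewrite !dotvZl; ring.
have [uu0|uu_neq0] := eqVneq (dotv u u) 0.
  suff -> : dotv u v = 0 by rewrite uu0 expr0n mul0r.
  (* the quadratic is then affine in [t], and nonnegative only if its slope vanishes *)
  apply/eqP/negPn/negP => uv_neq0.
  have cancel_uv : 2 * ((dotv v v + 1) / (2 * dotv u v)) * dotv u v = dotv v v + 1.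
    by field.
  by have := quad ((dotv v v + 1) / (2 * dotv u v)); rewrite uu0 mulr0 sub0r cancel_uv; lra.
have uu_gt0 : 0 < dotv u u by rewrite lt_def uu_neq0 dotvv_ge0.
have := quad (dotv u v / dotv u u).
have -> : (dotv u v / dotv u u) ^+ 2 * dotv u u - 2 * (dotv u v / dotv u u) * dotv u v
          + dotv v v = dotv v v - dotv u v ^+ 2 / dotv u u by field.
by rewrite subr_ge0 ler_pdivrMr // mulrC.
Qed.

Lemma dotv_le n (u v : 'rV[R]_n) : `|dotv u v| <= vnorm u * vnorm v.
Proof.
rewrite /vnorm -sqrtrM ?dotvv_ge0 // -sqrtr_sqr.
exact/ler_wsqrtr/dotv_sqr_le.
Qed.

Lemma vnormD_le n (u v : 'rV[R]_n) : vnorm (u + v) <= vnorm u + vnorm v.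
Proof.
rewrite -ler_sqr ?nnegrE ?addr_ge0 ?vnorm_ge0 // vnorm_sqr sqrrD !vnorm_sqr.
rewrite dotvDl !(dotvC _ (u + v)) !dotvDl (dotvC v u).
have := le_trans (ler_norm _) (dotv_le u v); lra.
Qed.

Lemma coord_le_vnorm n (u : 'rV[R]_n) i : `|u ord0 i| <= vnorm u.
Proof.
rewrite /vnorm -sqrtr_sqr; apply: ler_wsqrtr.
by rewrite dotvvE (bigD1 i) //= lerDl sumr_ge0 // => j _; rewrite sqr_ge0.
Qed.

Lemma dotv_mulmx k d (U : 'M[R]_(k, d)) (v : 'rV[R]_k) (x : 'rV[R]_d) :
  dotv (v *m U) x = dotv v (x *m U^T).
Proof.
rewrite /dotv; under eq_bigr do rewrite mxE big_distrl /=.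
rewrite exchange_big /=; apply: eq_bigr => i _.
by rewrite mxE big_distrr /=; apply: eq_bigr => l _; rewrite mxE; ring.
Qed.

Lemma dotv_row k d (U : 'M[R]_(k, d)) (x : 'rV[R]_d) i :
  dotv (row i U) x = (x *m U^T) ord0 i.
Proof. by rewrite mxE; apply: eq_bigr => l _; rewrite !mxE mulrC. Qed.

Section OrthonormalRows.
Variables (k d : nat) (U : 'M[R]_(k, d)).
Hypothesis U_orth : U *m U^T = 1%:M.

Lemma vnorm_row i : vnorm (row i U) = 1.
Proof. by rewrite /vnorm dotv_row -row_mul U_orth !mxE eqxx sqrtr1. Qed.

Lemma vnorm_mulmx_tr (x : 'rV[R]_d) : vnorm (x *m U^T) <= vnorm x.
Proof.
set y := x *m U^T.
have y_norm : vnorm (y *m U) = vnorm y.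
  by rewrite /vnorm dotv_mulmx -mulmxA U_orth mulmx1.
have [y0|y_neq0] := eqVneq (vnorm y) 0; first by rewrite y0 vnorm_ge0.
have y_gt0 : 0 < vnorm y by rewrite lt_def y_neq0 vnorm_ge0.
rewrite -(ler_pM2l y_gt0).
rewrite -expr2 vnorm_sqr {2}/y -dotv_mulmx -y_norm.
exact: le_trans (ler_norm _) (dotv_le _ _).
Qed.

End OrthonormalRows.

Lemma dotv_PiU_le k d (U : 'M[R]_(k, d)) (w x : 'rV[R]_d) :
  `|dotv (PiU U w) x| <= vnorm (x *m U^T).
Proof.
rewrite /PiU; case: ifP => _.
  rewrite /first_row; case: pickP => [i _|_]; first by rewrite dotv_row coord_le_vnorm.
  by rewrite /dotv big1 ?normr0 ?vnorm_ge0 // => l _; rewrite mxE mul0r.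
rewrite dotvZl dotv_mulmx normrM ger0_norm ?invr_ge0 ?vnorm_ge0 //.
apply: le_trans (ler_wpM2l _ (dotv_le _ _)) _; first by rewrite invr_ge0 vnorm_ge0.
have [->|nz] := eqVneq (vnorm (w *m U^T)) 0; first by rewrite invr0 !mul0r vnorm_ge0.
by rewrite mulrA mulVf // mul1r.
Qed.

End Euclidean.

Section RealInequalities.
Variable R : realType.
Implicit Types x y s a m beta : R.

Lemma powR_addr_le x y a : 0 <= x -> 0 <= y -> 0 <= a ->
  (x + y) `^ a <= 2 `^ a * (x `^ a + y `^ a).
Proof.
move=> x0 y0 a0; wlog xy : x y x0 y0 / x <= y.
  move=> wlog_xy; have [|/ltW yx] := leP x y; first exact: wlog_xy.
  by rewrite addrC [x `^ a + _]addrC wlog_xy.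
apply: (@le_trans _ _ ((2 * y) `^ a)).
  by apply: ge0_ler_powR; rewrite ?nnegrE ?addr_ge0 ?mulr_ge0 //; lra.
by rewrite powRM // ler_wpM2l ?powR_ge0 // lerDr powR_ge0.
Qed.

Lemma powR2_ge1 a : 0 <= a -> 1 <= 2 `^ a.
Proof. by move=> a0; rewrite -[X in X <= _](powRr0 2); apply: ler_powR => //; lra. Qed.

Lemma powR_add3_le x y z a : 0 <= x -> 0 <= y -> 0 <= z -> 0 <= a ->
  (x + y + z) `^ a <= (2 `^ a) ^+ 2 * (x `^ a + y `^ a + z `^ a).
Proof.
move=> x0 y0 z0 a0; have two_a := powR2_ge1 a0.
apply: le_trans (powR_addr_le (addr_ge0 x0 y0) z0 a0) _.
rewrite expr2 -mulrA ler_wpM2l ?(le_trans ler01) // mulrDr.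
apply: lerD; first exact: powR_addr_le.
by rewrite ler_peMl ?powR_ge0.
Qed.

Lemma sqr_powR x a : 0 <= x -> (x `^ a) ^+ 2 = x `^ (2 * a).
Proof. by move=> x0; rewrite mulrC powRrM powR_mulrn // powR_ge0. Qed.

Lemma sqr_le_1DpowR x a : 0 <= x -> 1 <= a -> x ^+ 2 <= 1 + x `^ (2 * a).
Proof.
move=> x0 a1; have [x1|x1] := leP x 1.
  by apply: (@le_trans _ _ 1); rewrite ?lerDl ?powR_ge0 // expr2; nra.
rewrite -(powR_mulrn 2 x0) -[_ `^ _]add0r lerD //; apply: ler_powR; first exact: ltW.
by rewrite -[X in X <= _]mulr1 ler_wpM2l.
Qed.

Lemma ln_le_subr1 y : 0 < y -> ln y <= y - 1.
Proof. by move=> y0; have := @le_ln1Dx R (y - 1); rewrite addrCA subrr addr0; apply; lra. Qed.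

(* [s `^ m] has Gaussian-dominated growth: [m ln s <= s^2 / beta + m/2 ln (m beta / 2)]
   is [ln y <= y - 1] at [y = s^2 / (m beta / 2)]. *)
Definition powR_exp_const beta m := 2 + expR (m / 2 * ln (m * beta / 2)).

Lemma powR_le_expR beta s m : 0 < beta -> 0 <= s -> 0 <= m ->
  1 + s `^ m <= powR_exp_const beta m * expR (s ^+ 2 / beta).
Proof.
move=> beta0 s0 m0; rewrite /powR_exp_const.
set E := expR (_ * _); have E0 : 0 < E := expR_gt0 _.
have exp_ge1 : 1 <= expR (s ^+ 2 / beta).
  by rewrite -expR0 ler_expR divr_ge0 ?sqr_ge0 ?ltW.
have [s_eq0|s_neq0] := eqVneq s 0.
  have : s `^ m <= 1 by rewrite s_eq0 /powR eqxx; case: (m == 0).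
  nra.
have [m_eq0|m_neq0] := eqVneq m 0; first by rewrite m_eq0 powRr0; nra.
have s_gt0 : 0 < s by rewrite lt_def s_neq0.
have c_gt0 : 0 < m * beta / 2 by rewrite divr_gt0 // mulr_gt0 // lt_def m_neq0.
suff : s `^ m <= E * expR (s ^+ 2 / beta) by nra.
rewrite -expRD /powR (negbTE s_neq0) ler_expR.
have := ln_le_subr1 (divr_gt0 (exprn_gt0 2 s_gt0) c_gt0).
rewrite [ln (_ / _)]ln_div ?posrE ?exprn_gt0 // lnXn // => ln_le.
have := ler_wpM2l (divr_ge0 m0 (ler0n _ 2)) ln_le.
have -> : m / 2 * (ln s *+ 2 - ln (m * beta / 2)) = m * ln s - m / 2 * ln (m * beta / 2).
  by rewrite mulr2n; field.
have -> : m / 2 * (s ^+ 2 / (m * beta / 2) - 1) = s ^+ 2 / beta - m / 2.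
  by field; rewrite m_neq0 gt_eqF.
rewrite /E; lra.
Qed.

Lemma expR_mean_le_sum k (k_gt0 : (0 < k)%N) (f : 'I_k -> R) :
  expR ((\sum_i f i) / k%:R) <= \sum_i expR (f i).
Proof.
pose i0 := Order.arg_max (Ordinal k_gt0) xpredT f.
have f_le i : f i <= f i0 by rewrite /i0; case: arg_maxP => // j _; apply.
apply: (@le_trans _ _ (expR (f i0))).
  rewrite ler_expR ler_pdivrMr ?ltr0n // mulr_natr -[X in _ *+ X]card_ord -sumr_const.
  exact: ler_sum.
by rewrite (bigD1 i0) //= lerDl sumr_ge0 // => i _; rewrite expR_ge0.
Qed.

Lemma expR_half_le alpha r s : 0 < alpha -> 0 <= r -> r / 2 <= s ->
  expR (s ^+ 2 / (2 * alpha)) <= expR (- (8 * alpha)^-1 * r ^+ 2) * expR (s ^+ 2 / alpha).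
Proof.
move=> alpha0 r0 rs; rewrite -expRD ler_expR.
have rs2 : (r / 2) ^+ 2 <= s ^+ 2 by rewrite ler_sqr ?nnegrE //; lra.
have -> : - (8 * alpha)^-1 * r ^+ 2 + s ^+ 2 / alpha
          = s ^+ 2 / (2 * alpha) + (s ^+ 2 - (r / 2) ^+ 2) / (2 * alpha).
  by field; rewrite gt_eqF.
by rewrite lerDl divr_ge0 ?subr_ge0 // mulr_ge0 ?ltW.
Qed.

Lemma affine_le_mul1D (A B x y : R) : 0 <= A -> 0 <= B -> 0 <= x -> 0 <= y ->
  A + B * (x + y) <= (A + B) * (1 + x) * (1 + y).
Proof.
move=> A0 B0 x0 y0; rewrite -subr_ge0.
have -> : (A + B) * (1 + x) * (1 + y) - (A + B * (x + y))
          = B + A * (x + y) + (A + B) * (x * y) by ring.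
by rewrite !addr_ge0 // !mulr_ge0 // addr_ge0.
Qed.

Lemma sqr_le_growth (H L t p : R) : 0 <= t -> `|H| <= L * (1 + t `^ p) ->
  H ^+ 2 <= 2 * L ^+ 2 * (1 + t `^ (2 * p)).
Proof.
move=> t0 H_le; have tp := powR_ge0 t p.
have L0 : 0 <= L by have := normr_ge0 H; nra.
rewrite -sqr_powR // -real_normK ?num_real //.
apply: (@le_trans _ _ ((L * (1 + t `^ p)) ^+ 2)).
  by rewrite ler_sqr ?nnegrE // mulr_ge0 // addr_ge0.
have := sqr_ge0 (t `^ p - 1); have := sqr_ge0 L; rewrite !expr2; nra.
Qed.

Lemma sqr_le_growth_split (H L t s e p : R) : 0 <= s -> 0 <= e -> 0 <= p -> 0 <= t ->
  t <= s + e -> `|H| <= L * (1 + t `^ p) ->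
  H ^+ 2 <= 2 * L ^+ 2 * ((1 + 2 `^ (2 * p)) * (1 + s `^ (2 * p)) * (1 + e `^ (2 * p))).
Proof.
move=> s0 e0 p0 t0 ts H_le; have p2_ge0 : 0 <= 2 * p by rewrite mulr_ge0.
apply: le_trans (sqr_le_growth t0 H_le) _.
apply: ler_wpM2l; first by rewrite mulr_ge0 ?sqr_ge0.
apply: le_trans (affine_le_mul1D _ _ _ _) => //; rewrite ?powR_ge0 //.
apply: lerD => //; apply: le_trans (powR_addr_le s0 e0 p2_ge0).
by apply: ge0_ler_powR; rewrite ?nnegrE ?addr_ge0.
Qed.

End RealInequalities.

Section Network.
Variable R : realType.

Lemma PL_cond_normr_le (sigma : R -> R) (Ls q z M : R) :
  PL_cond sigma Ls q -> `|z| <= M -> `|sigma z| <= `|Ls| * (M `^ q + 2 * M).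
Proof.
move=> [sigma0 [q1 sigma_lip]] zM; have M0 := le_trans (normr_ge0 _) zM.
have := sigma_lip z 0; rewrite sigma0 !subr0 normr0 => /le_trans; apply.
have pow0_le1 : 0 `^ (q - 1) <= 1 by rewrite /powR eqxx; case: (_ == 0).
have pow_z : `|z| `^ (q - 1) * `|z| <= `|z| `^ q.
  have [->|z_neq0] := eqVneq `|z| 0; first by rewrite mulr0 powR_ge0.
  by rewrite mulrC mulr_powRB1 ?lt_def ?z_neq0 //; lra.
have pow_zM : `|z| `^ q <= M `^ q by apply: ge0_ler_powR; rewrite ?nnegrE //; lra.
rewrite -mulrA; apply: le_trans (ler_wpM2r _ (ler_norm Ls)) _.
  by rewrite mulr_ge0 ?addr_ge0 ?powR_ge0.
rewrite ler_wpM2l // !mulrDl mul1r.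
have : 0 `^ (q - 1) * `|z| <= `|z| by rewrite ler_piMl ?powR_ge0.
lra.
Qed.

Lemma sum_normr_le_sparse N (a : 'I_N -> R) (S : {set 'I_N}) (ra : R) :
  (forall j, j \notin S -> a j = 0) ->
  vnorm (\row_j a j) <= ra / Num.sqrt #|S|%:R ->
  \sum_j `|a j| <= `|ra|.
Proof.
move=> a_supp a_norm.
set ind := \row_j ((j \in S)%:R : R); set abs_a := \row_j `|a j|.
have -> : \sum_j `|a j| = dotv ind abs_a.
  apply: eq_bigr => j _; rewrite !mxE.
  by case: (boolP (j \in S)) => jS; rewrite ?mul1r // a_supp // normr0 mulr0.
have ind_norm : vnorm ind = Num.sqrt #|S|%:R.
  rewrite /vnorm dotvvE -sumr_const [in RHS]big_mkcond /=.
  congr Num.sqrt; apply: eq_bigr => j _.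
  by rewrite !mxE; case: (j \in S); rewrite ?expr1n ?expr0n.
have abs_norm : vnorm abs_a = vnorm (\row_j a j).
  rewrite /vnorm !dotvvE; congr Num.sqrt.
  by apply: eq_bigr => j _; rewrite !mxE real_normK ?num_real.
apply: le_trans (ler_norm _) _; apply: le_trans (dotv_le _ _) _.
rewrite ind_norm abs_norm.
have [S0|S_neq0] := eqVneq (#|S|%:R : R) 0; first by rewrite S0 sqrtr0 mul0r.
have sqrtS_gt0 : 0 < Num.sqrt (#|S|%:R : R) by rewrite sqrtr_gt0 lt_def S_neq0 ler0n.
rewrite mulrC -ler_pdivlMr //; apply: (le_trans a_norm).
by apply: ler_wpM2r; [rewrite invr_ge0 ltW | exact: ler_norm].
Qed.

Lemma netf_eq0 d N (sigma : R -> R) (x : 'rV[R]_d) (a b : 'I_N -> R) (W : 'M[R]_(N, d))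
    (rb : R) :
  (forall j, `|b j| <= rb) -> rb < 0 -> netf sigma x a W b = 0.
Proof.
move=> b_le rb_lt0; rewrite /netf big1 // => j _.
by have := le_lt_trans (normr_ge0 _) (le_lt_trans (b_le j) rb_lt0); rewrite ltxx.
Qed.

Section NetworkBound.
Variables (k d N : nat) (U : 'M[R]_(k, d)) (W : 'M[R]_(N, d)).
Variables (b a : 'I_N -> R) (S : {set 'I_N}) (sigma : R -> R) (Ls q rb ra : R).
Hypotheses (b_le : forall j, `|b j| <= rb) (a_supp : forall j, j \notin S -> a j = 0).
Hypotheses (a_norm : vnorm (\row_j a j) <= ra / Num.sqrt #|S|%:R) (sigma_PL : PL_cond sigma Ls q).

Section NonnegativeBias.
Hypothesis rb_ge0 : 0 <= rb.
Variable x : 'rV[R]_d.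
Let M := vnorm (x *m U^T) + rb.

Lemma netf_normr_le :
  `|netf sigma x a (PiUW U W) b| <= `|ra| * (`|Ls| * (M `^ q + 2 * M)).
Proof.
have row_PiUW j : dotv (row j (PiUW U W)) x = dotv (PiU U (row j W)) x.
  by apply: eq_bigr => l _; rewrite !mxE.
apply: le_trans (ler_norm_sum _ _ _) _.
apply: (@le_trans _ _ (\sum_j `|a j| * (`|Ls| * (M `^ q + 2 * M)))).
  apply: ler_sum => j _; rewrite normrM ler_wpM2l //.
  apply: PL_cond_normr_le => //; apply: le_trans (ler_normD _ _) _.
  by rewrite lerD // row_PiUW dotv_PiU_le.
rewrite -mulr_suml ler_wpM2r ?(sum_normr_le_sparse a_supp) //.
by rewrite mulr_ge0 ?addr_ge0 ?powR_ge0 ?mulr_ge0 ?addr_ge0 ?vnorm_ge0.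
Qed.

Lemma netf_sqr_le :
  netf sigma x a (PiUW U W) b ^+ 2 <= Ls ^+ 2 * ra ^+ 2 * (8 + 10 * M `^ (2 * q)).
Proof.
have M0 : 0 <= M by rewrite addr_ge0 ?vnorm_ge0.
have q1 : 1 <= q by case: sigma_PL => _ [].
apply: (@le_trans _ _ ((`|ra| * (`|Ls| * (M `^ q + 2 * M))) ^+ 2)).
  by rewrite -real_normK ?num_real // ler_sqr ?nnegrE ?netf_normr_le //
     !mulr_ge0 ?addr_ge0 ?powR_ge0 ?mulr_ge0.
rewrite !exprMn !real_normK ?num_real // mulrA [ra ^+ 2 * _]mulrC.
apply: ler_wpM2l; first by rewrite mulr_ge0 ?sqr_ge0.
have := sqr_le_1DpowR M0 q1; rewrite -sqr_powR //.
have := sqr_ge0 (M `^ q - 2 * M); lra.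
Qed.

End NonnegativeBias.

Lemma netf_sqr_le_split (x : 'rV[R]_d) (s e : R) :
  0 <= s -> 0 <= e -> vnorm (x *m U^T) <= s + e ->
  netf sigma x a (PiUW U W) b ^+ 2 <=
  Ls ^+ 2 * ra ^+ 2 * ((8 + 10 * (2 `^ (2 * q)) ^+ 2) * (1 + s `^ (2 * q))
                       * (1 + e `^ (2 * q) + rb `^ (2 * q))).
Proof.
move=> s0 e0 xU_le; have [_ [q1 _]] := sigma_PL; have q_ge0 : 0 <= 2 * q by lra.
have coef0 : 0 <= Ls ^+ 2 * ra ^+ 2 by rewrite mulr_ge0 ?sqr_ge0.
have cq0 : 0 <= (2 `^ (2 * q)) ^+ 2 := sqr_ge0 _.
have [rb0|rb_neg] := leP 0 rb; last first.
  rewrite (netf_eq0 _ _ _ _ b_le) // expr0n /= mulr_ge0 //.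
  by rewrite !mulr_ge0 ?addr_ge0 ?powR_ge0 // mulr_ge0.
apply: le_trans (netf_sqr_le rb0 x) _; apply: ler_wpM2l => //.
set c := (2 `^ (2 * q)) ^+ 2.
apply: (@le_trans _ _ (8 + 10 * (c * (s `^ (2 * q) + (e `^ (2 * q) + rb `^ (2 * q)))))).
  rewrite lerD2l ler_wpM2l // addrA; apply: le_trans (powR_add3_le s0 e0 rb0 q_ge0).
  by apply: ge0_ler_powR; rewrite ?nnegrE ?addr_ge0 ?vnorm_ge0 ?lerD2r.
rewrite mulrA -[1 + _ + _]addrA.
by apply: affine_le_mul1D; rewrite ?mulr_ge0 ?addr_ge0 ?powR_ge0.
Qed.

End NetworkBound.
End Network.

Section LossBound.
Variable R : realType.

Definition net_tail_const (beta q : R) :=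
  2 * (8 + 10 * (2 `^ (2 * q)) ^+ 2) * powR_exp_const beta (2 * q).
Definition target_tail_const (beta p : R) :=
  4 * (1 + 2 `^ (2 * p)) * powR_exp_const beta (2 * p).

Section TailBound.
Variables (k d N : nat) (U : 'M[R]_(k, d)) (W : 'M[R]_(N, d)).
Variables (b a : 'I_N -> R) (S : {set 'I_N}) (sigma : R -> R) (Ls q rb ra : R).
Variables (h : 'rV[R]_k -> R) (Lh p eps : R).
Hypotheses (U_orth : U *m U^T = 1%:M) (b_le : forall j, `|b j| <= rb).
Hypotheses (a_supp : forall j, j \notin S -> a j = 0).
Hypotheses (a_norm : vnorm (\row_j a j) <= ra / Num.sqrt #|S|%:R) (sigma_PL : PL_cond sigma Ls q).
Hypotheses (h_growth : forall z, `|h z| <= Lh * (1 + vnorm z `^ p)).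
Hypotheses (eps_ge0 : 0 <= eps) (p_ge0 : 0 <= p).

Definition loss_tail_coef (beta : R) :=
  Ls ^+ 2 * ra ^+ 2 * (1 + eps `^ (2 * q) + rb `^ (2 * q)) * net_tail_const beta q
  + Lh ^+ 2 * (1 + eps `^ (2 * p)) * target_tail_const beta p.

Lemma loss_sqr_le_expR (beta : R) (x delta : 'rV[R]_d) :
  0 < beta -> vnorm delta <= eps ->
  (netf sigma (x + delta) a (PiUW U W) b - h ((x + delta) *m U^T)) ^+ 2 <=
  loss_tail_coef beta * expR (vnorm (x *m U^T) ^+ 2 / beta).
Proof.
move=> beta_gt0 delta_le.
have [_ [q1 _]] := sigma_PL; have q_ge0 : 0 <= 2 * q by lra.
have p2_ge0 : 0 <= 2 * p by rewrite mulr_ge0.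
set s := vnorm (x *m U^T); set E := expR _; have s0 : 0 <= s := vnorm_ge0 _.
have ts : vnorm ((x + delta) *m U^T) <= s + eps.
  rewrite mulmxDl; apply: le_trans (vnormD_le _ _) _.
  by rewrite lerD // (le_trans (vnorm_mulmx_tr U_orth _)).
set F := netf _ _ _ _ _; set H := h _.
have F_le := netf_sqr_le_split W b_le a_supp a_norm sigma_PL s0 eps_ge0 ts.
rewrite -/F in F_le.
have H_le := sqr_le_growth_split s0 eps_ge0 p_ge0 (vnorm_ge0 _) ts (h_growth _).
rewrite -/H in H_le.
set CF := Ls ^+ 2 * ra ^+ 2 * (8 + 10 * (2 `^ (2 * q)) ^+ 2)
          * (1 + eps `^ (2 * q) + rb `^ (2 * q)).
set CH := 2 * Lh ^+ 2 * ((1 + 2 `^ (2 * p)) * (1 + eps `^ (2 * p))).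
have CF0 : 0 <= CF.
  apply: mulr_ge0 (mulr_ge0 (mulr_ge0 (sqr_ge0 _) (sqr_ge0 _)) _) _.
    by have := sqr_ge0 (2 `^ (2 * q)); lra.
  by rewrite !addr_ge0 ?powR_ge0.
have CH0 : 0 <= CH.
  by apply: mulr_ge0 (mulr_ge0 _ (sqr_ge0 _)) (mulr_ge0 _ _); rewrite ?addr_ge0 ?powR_ge0.
have {}F_le : F ^+ 2 <= CF * (powR_exp_const beta (2 * q) * E).
  apply: le_trans F_le _.
  rewrite (_ : Ls ^+ 2 * ra ^+ 2 * _ = CF * (1 + s `^ (2 * q))); last by rewrite /CF; ring.
  exact/ler_wpM2l/powR_le_expR.
have {}H_le : H ^+ 2 <= CH * (powR_exp_const beta (2 * p) * E).
  apply: le_trans H_le _.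
  rewrite (_ : 2 * Lh ^+ 2 * _ = CH * (1 + s `^ (2 * p))); last by rewrite /CH; ring.
  exact/ler_wpM2l/powR_le_expR.
have sqrB_le : (F - H) ^+ 2 <= 2 * F ^+ 2 + 2 * H ^+ 2.
  by rewrite -subr_ge0 (_ : _ - _ = (F + H) ^+ 2) ?sqr_ge0 //; ring.
rewrite (_ : _ * E = 2 * (CF * (powR_exp_const beta (2 * q) * E))
                   + 2 * (CH * (powR_exp_const beta (2 * p) * E))); first lra.
by rewrite /loss_tail_coef /CF /CH /net_tail_const /target_tail_const; ring.
Qed.

Lemma loss_tail_coef_ge0 beta : 0 <= loss_tail_coef beta.
Proof.
have D_ge0 m : 0 <= powR_exp_const beta m by rewrite addr_ge0 ?expR_ge0.
have two_pow_ge0 m : 0 <= 2 `^ m := powR_ge0 _ _.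
rewrite /loss_tail_coef /net_tail_const /target_tail_const.
apply: addr_ge0; apply: mulr_ge0.
- apply: mulr_ge0; first exact: mulr_ge0 (sqr_ge0 _) (sqr_ge0 _).
  by rewrite !addr_ge0 ?powR_ge0.
- by apply: mulr_ge0 (D_ge0 _); apply: mulr_ge0.
- by apply: mulr_ge0 (sqr_ge0 _) _; rewrite addr_ge0 ?powR_ge0.
- by apply: mulr_ge0 (D_ge0 _); apply: mulr_ge0; rewrite ?addr_ge0.
Qed.

Lemma eps_approx_ge0 rz : 0 <= rz -> (0 <= eps_approx sigma a U W b h rz)%E.
Proof.
move=> rz0; apply: le_trans (ereal_sup_ubound _) => /=; last first.
  by exists 0; rewrite /= ?mul0mx ?vnorm0.
by rewrite lee_fin.
Qed.

Lemma adv_loss_ge0 x : (0 <= adv_loss sigma a U W b h eps x)%E.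
Proof.
apply: le_trans (ereal_sup_ubound _) => /=; last by exists 0; rewrite /= ?vnorm0.
by rewrite lee_fin sqr_ge0.
Qed.

Lemma adv_loss_le (alpha rz G : R) (x : 'rV[R]_d) (ea := eps_approx sigma a U W b h rz) :
  0 < alpha -> Num.max 1 (2 * eps) <= rz -> expR (vnorm (x *m U^T) ^+ 2 / alpha) <= G ->
  (adv_loss sigma a U W b h eps x <=
   ea * ea + (loss_tail_coef (2 * alpha) * expR (- (8 * alpha)^-1 * rz ^+ 2) * G)%:E)%E.
Proof.
move=> alpha_gt0; rewrite ge_max => /andP[rz1 rz_eps] G_ge.
set B := loss_tail_coef _; set s := vnorm (x *m U^T).
have beta_gt0 : 0 < 2 * alpha by rewrite mulr_gt0.
have B_ge0 : 0 <= B := loss_tail_coef_ge0 _.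
have G_ge0 : 0 <= G := le_trans (expR_ge0 _) G_ge.
have tail_ge0 : (0 <= (B * expR (- (8 * alpha)^-1 * rz ^+ 2) * G)%:E)%E.
  by rewrite lee_fin !mulr_ge0 ?expR_ge0.
apply: ge_ereal_sup => _ [delta delta_le <-].
have [t_le|t_gt] := leP (vnorm ((x + delta) *m U^T)) rz.
  apply: le_trans _ (leeDl _ tail_ge0).
  have ub : (`|netf sigma (x + delta) a (PiUW U W) b - h ((x + delta) *m U^T)|%:E
              <= ea)%E.
    by apply: ereal_sup_ubound; exists (x + delta).
  by rewrite -real_normK ?num_real // expr2 EFinM; apply: lee_pmul.
have ea_ge0 : (0 <= ea)%E := eps_approx_ge0 (le_trans ler01 rz1).
apply: le_trans _ (leeDr _ (mule_ge0 ea_ge0 ea_ge0)).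
rewrite lee_fin; set F := netf _ _ _ _ _; set H := h _.
have := loss_sqr_le_expR x beta_gt0 delta_le; rewrite -/F -/H => /le_trans; apply.
have s_ge : rz / 2 <= s.
  have := vnormD_le (x *m U^T) (delta *m U^T); rewrite -mulmxDl -/s.
  have := le_trans (vnorm_mulmx_tr U_orth delta) delta_le; lra.
rewrite -/B -/s -mulrA; apply: ler_wpM2l => //.
apply: le_trans (expR_half_le alpha_gt0 (le_trans ler01 rz1) s_ge) _.
by apply: ler_wpM2l; [exact: expR_ge0 | exact G_ge].
Qed.

End TailBound.
End LossBound.

Lemma expR_sqr_vnorm_le_sum (R : realType) k (k_gt0 : (0 < k)%N) (y : 'rV[R]_k)
    (c : R) :
  expR (vnorm y ^+ 2 / (k%:R * c)) <= \sum_i expR (y ord0 i ^+ 2 / c).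
Proof.
rewrite vnorm_sqr dotvvE invfM [_^-1 * _]mulrC mulrA mulr_suml.
exact: expR_mean_le_sum.
Qed.

Section Expectation.
Variables (R : realType) (dT : measure_display) (T : measurableType dT).
Variable P : probability T R.

Lemma integral_le_add_cst (f : T -> \bar R) (g : T -> R) (c : \bar R) (C : R) :
  (0 <= c)%E -> 0 <= C -> measurable_fun setT f -> (forall w, 0 <= f w)%E ->
  measurable_fun setT g -> (forall w, 0 <= g w) ->
  (forall w, f w <= c + (C * g w)%:E)%E ->
  (\int[P]_w f w <= c + C%:E * \int[P]_w (g w)%:E)%E.
Proof.
move=> c0 C0 mf f0 mg g0 f_le.
have mCg : measurable_fun setT (fun w => (C * g w)%:E).
  by apply/measurable_EFinP; apply: measurable_funM.
apply: le_trans (ge0_le_integral _ _ _ mf _ (fun w _ => f_le w)) _ => //.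
- by apply: emeasurable_funD.
rewrite ge0_integralD //; last by move=> w _; rewrite lee_fin mulr_ge0.
rewrite integral_cst // -[X in (_ * X)%E]/(P setT) probability_setT mule1.
under eq_integral do rewrite EFinM.
rewrite ge0_integralZl_EFin //; first by move=> w _; rewrite lee_fin.
exact/measurable_EFinP.
Qed.

Lemma integral_expR_le_of_psi2norm (Y : T -> R) (t : R) :
  measurable_fun setT Y -> (psi2norm P Y < t%:E)%E ->
  (\int[P]_w (expR (Y w ^+ 2 / t ^+ 2))%:E <= 2%:E)%E.
Proof.
move=> mY /ereal_inf_lt[_ [t' [t'_gt0 int_le] <-]]; rewrite lte_fin => t't.
have mexp (u : R) : measurable_fun setT (fun w => (expR (Y w ^+ 2 / u))%:E).
  apply/measurable_EFinP; apply: measurableT_comp => //.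
  by apply: measurable_funM => //; apply: measurable_funX.
apply: le_trans int_le; apply: ge0_le_integral => // w _.
rewrite lee_fin ler_expR ler_wpM2l ?sqr_ge0 // lef_pV2 ?posrE ?exprn_gt0 //; last lra.
by rewrite ler_sqr ?nnegrE; lra.
Qed.

End Expectation.

Lemma measurable_expR_sqr_dotv (R : realType) (dT : measure_display) (T : measurableType dT)
    d (X : T -> 'rV[R]_d) (v : 'rV[R]_d) (c : R) :
  (forall i, measurable_fun setT (fun w => X w ord0 i)) ->
  measurable_fun setT (fun w => expR (dotv v (X w) ^+ 2 / c)).
Proof.
move=> mX; apply: measurableT_comp => //; apply: measurable_funM => //.
by apply: measurable_funX; apply: measurable_sum => l; apply: measurable_funM.
Qed.

Lemma integral_sum_expR_rows_le (R : realType) (dT : measure_display) (T : measurableType dT)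
    (P : probability T R) (K : R) k d (X : T -> 'rV[R]_d) (U : 'M[R]_(k, d)) :
  0 < K -> U *m U^T = 1%:M -> (forall i, measurable_fun setT (fun w => X w ord0 i)) ->
  (subg_norm_vec P X <= K%:E)%E ->
  (\int[P]_w (\sum_i expR (dotv (row i U) (X w) ^+ 2 / (2 * K) ^+ 2))%:E
   <= (2 * k%:R)%:E)%E.
Proof.
move=> K_gt0 U_orth mX X_subg.
under eq_integral do rewrite -sumEFin.
rewrite ge0_integral_sum // => [|i]; last first.
  exact/measurable_EFinP/measurable_expR_sqr_dotv.
apply: (@le_trans _ _ (\sum_(i < k) 2%:E)%E); last first.
  by rewrite sumEFin sumr_const card_ord lee_fin mulr_natr.
apply: lee_sum => i _; apply: integral_expR_le_of_psi2norm.
  by apply: measurable_sum => l; apply: measurable_funM.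
apply: le_lt_trans (_ : K%:E < _)%E; last by rewrite lte_fin; lra.
apply: le_trans X_subg; apply: ereal_sup_ubound; exists (row i U) => //=.
exact: vnorm_row.
Qed.

Theorem lemmaD (R : realType) (K : R) (hK : 0 < K) (k : nat) (hk : (0 < k)%N) :
  exists c : R, 0 < c /\
  exists (Cq : R -> R) (Cpk : R -> R),
  forall (dT : measure_display) (T : measurableType dT) (P : probability T R)
    (d N : nat) (X : T -> 'rV[R]_d)
    (U : 'M[R]_(k, d)) (W : 'M[R]_(N, d)) (b astar : 'I_N -> R)
    (S : {set 'I_N}) (sigma : R -> R) (Ls qbar : R)
    (h : 'rV[R]_k -> R) (Lh p : R) (eps rb ra rz : R),
  U *m U^T = 1%:M ->
  (forall j, vnorm (row j W) = 1) ->
  (forall j, `|b j| <= rb) ->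
  (forall j, j \notin S -> astar j = 0) ->
  vnorm (\row_j astar j) <= ra / Num.sqrt (#|S|%:R) ->
  0 <= eps ->
  Num.max 1 (2 * eps) <= rz ->
  0 <= p ->
  (forall z, `|h z| <= Lh * (1 + vnorm z `^ p)) ->
  PL_cond sigma Ls qbar ->
  (forall i, measurable_fun setT (fun w => X w ord0 i)) ->
  (forall i, P.-integrable setT (fun w => (X w ord0 i)%:E)) ->
  (forall i, (\int[P]_w (X w ord0 i)%:E = 0)%E) ->
  (subg_norm_vec P X <= K%:E)%E ->
  measurable_fun setT (fun w : T => adv_loss sigma astar U W b h eps (X w)) ->
  (\int[P]_w adv_loss sigma astar U W b h eps (X w)
   <= eps_approx sigma astar U W b h rz * eps_approx sigma astar U W b h rz
      + ((Cq qbar * Ls ^+ 2 * ra ^+ 2 * (1 + eps `^ (2 * qbar) + rb `^ (2 * qbar))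
          + Cpk p * Lh ^+ 2 * (1 + eps `^ (2 * p))) * expR (- c * rz ^+ 2))%:E)%E.
Proof.
pose alpha := k%:R * (2 * K) ^+ 2.
have alpha_gt0 : 0 < alpha by rewrite mulr_gt0 ?ltr0n ?exprn_gt0 ?mulr_gt0.
exists (8 * alpha)^-1; split; first by rewrite invr_gt0 mulr_gt0.
exists (fun q => 2 * k%:R * net_tail_const (2 * alpha) q).
exists (fun p => 2 * k%:R * target_tail_const (2 * alpha) p).
move=> dT T P d N X U W b a S sigma Ls q h Lh p eps rb ra rz U_orth _ b_le a_supp a_norm
  eps_ge0 rz_ge p_ge0 h_growth sigma_PL mX _ _ X_subg m_loss.
pose G w := \sum_i expR (dotv (row i U) (X w) ^+ 2 / (2 * K) ^+ 2).
have G_ge w : expR (vnorm (X w *m U^T) ^+ 2 / alpha) <= G w.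
  apply: le_trans (expR_sqr_vnorm_le_sum hk _ _) _.
  by rewrite /G; under [in X in _ <= X]eq_bigr do rewrite dotv_row.
set B := loss_tail_coef Ls q rb ra Lh p eps (2 * alpha).
set ea := eps_approx sigma a U W b h rz.
have loss_le w : (adv_loss sigma a U W b h eps (X w)
                  <= ea * ea + (B * expR (- (8 * alpha)^-1 * rz ^+ 2) * G w)%:E)%E.
  exact (adv_loss_le W U_orth b_le a_supp a_norm sigma_PL h_growth eps_ge0 p_ge0
           alpha_gt0 rz_ge (G_ge w)).
have ea_ge0 : (0 <= ea)%E.
  by apply: eps_approx_ge0; apply: le_trans rz_ge; rewrite le_max ler01.
have mG : measurable_fun setT G.
  by apply: measurable_sum => i; apply: measurable_expR_sqr_dotv.
have G_ge0 w : 0 <= G w by rewrite sumr_ge0 // => i _; rewrite expR_ge0.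
apply: le_trans (integral_le_add_cst P (mule_ge0 ea_ge0 ea_ge0) _ m_loss _ mG G_ge0 loss_le)
               _.
- by rewrite mulr_ge0 ?loss_tail_coef_ge0 ?expR_ge0.
- by move=> w; apply: adv_loss_ge0.
rewrite leeD2l //.
apply: le_trans (lee_wpmul2l _ (integral_sum_expR_rows_le hK U_orth mX X_subg)) _.
  by rewrite lee_fin mulr_ge0 ?loss_tail_coef_ge0 ?expR_ge0.
by rewrite -EFinM lee_fin le_eqVlt /B /loss_tail_coef; apply/orP; left; apply/eqP; ring.
Qed.
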